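(* Let $k\geq 2$, let $0\leq r<1$ be real, and let $H$ be a $k$-hypertree with $|H|$ vertices and $e(H)$ edges. Then for every $k$-hypergraph $X$ with $n$ vertices and $n^{k-r}$ edges, $|\mathrm{Inj}(H,X)|=\Omega(n^{|H|-e(H)r})$ as $n\to\infty$, where the implicit constant depends only on $H$, $k$ and $r$.
   Context: A $k$-hypertree is a $k$-hypergraph built from a single edge by repeatedly adding an edge that meets the current hypergraph in exactly $k-1$ vertices all contained in one existing edge (so each new edge adds exactly one new vertex). $\mathrm{Inj}(H,X)$ is the set of injective maps $f$ from the vertices of $H$ to the vertices of $X$ such that the image of every edge of $H$ is an edge of $X$. *)

From mathcomp Require Import all_boot.
From Stdlib Require Import Reals.

Set Implicit Arguments.
Unset Strict Implicit.
Unset Printing Implicit Defensive.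

(* A k-hypergraph on a finite vertex type T is an edge set
   E : {set {set T}} all of whose edges have exactly k vertices. *)
Definition uniform (T : finType) (k : nat) (E : {set {set T}}) : Prop :=
  forall e, e \in E -> #|e| = k.

Inductive htree_on (T : finType) (k : nat) : {set T} -> {set {set T}} -> Prop :=
| htree_base (e : {set T}) :
    #|e| = k -> htree_on k e [set e]
| htree_step (S : {set T}) (E : {set {set T}}) (f g : {set T}) (v : T) :
    htree_on k S E -> f \in E -> g \subset f -> #|g| = k.-1 -> v \notin S ->
    htree_on k (v |: S) ((v |: g) |: E).

Definition is_hypertree (T : finType) (k : nat) (E : {set {set T}}) : Prop :=
  htree_on k [set: T] E.

Definition Inj (T V : finType) (EH : {set {set T}}) (EX : {set {set V}})
  : {set {ffun T -> V}} :=
  [set f : {ffun T -> V} | injectiveb f && [forall e in EH, (f @: e) \in EX]].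

From Stdlib Require Import Reals Lra.
From mathcomp Require Import all_boot zify.

(* Call a k-graph d-extendable if every (k-1)-subset of one of its edges lies
   in at least d edges.  Repeatedly deleting all edges through a (k-1)-set of
   degree < d removes fewer than d edges per element of the shadow, so it
   leaves a d-extendable X' inside X with |X| - |X'| <= d n^(k-1).  Embedding
   H edge by edge along its construction, the first edge may go to any edge
   of X' and every new vertex has at least d - |H| admissible images, whence
   |Inj(H, X)| >= |X'| (d - |H|)^(e(H)-1).  With d about n^(1-r)/2 we get
   |X'| >= n^(k-r)/2, and |H| = k + e(H) - 1 turns the bound into
   n^(|H| - e(H) r) up to a constant. *)

(* [nmodule] binds the key [%R] to [ring_scope]; the statement of [lemma8]
   needs it for [R_scope]. *)
Delimit Scope R_scope with R.

Set Implicit Arguments.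
Unset Strict Implicit.
Unset Printing Implicit Defensive.

Lemma bin_leq_expn n m : 'C(n, m) <= n ^ m.
Proof.
apply: leq_trans (leq_pmulr _ (fact_gt0 m)) _.
rewrite bin_ffact ffact_prod -[in n ^ m](subn0 m) -prod_nat_const_nat big_mkord.
by apply: leq_prod => i _; apply: leq_subr.
Qed.

Lemma subset_cardS_setU1 (T : finType) (A B : {set T}) :
  B \subset A -> #|A| = #|B|.+1 -> exists2 u, u \notin B & A = u |: B.
Proof.
move=> sBA cA.
have : 0 < #|A :\: B| by rewrite cardsD (setIidPr sBA) cA subSnn.
case/card_gt0P => u; rewrite inE => /andP[uB uA].
exists u => //; apply/eqP; rewrite eq_sym eqEcard subUset sub1set uA sBA.
by rewrite cardsU1 uB cA add1n leqnn.
Qed.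

Lemma exists_ffun_bij_on (T V : finType) (v0 : V) (A : {set T}) (B : {set V}) :
  #|A| = #|B| -> exists f : {ffun T -> V},
    [/\ {in A &, injective f}, f @: A = B & forall x, x \notin A -> f x = v0].
Proof.
move=> cAB; set sA := enum A; set sB := enum B.
have szAB : size sA = size sB by rewrite -!cardE.
pose f := [ffun x => if x \in A then nth v0 sB (index x sA) else v0].
have fA x : x \in A -> f x \in B.
  by move=> xA; rewrite ffunE xA -mem_enum mem_nth // -szAB index_mem mem_enum.
have injf : {in A &, injective f}.
  move=> x y xA yA; rewrite !ffunE xA yA => /eqP.
  rewrite nth_uniq ?enum_uniq // -?szAB ?index_mem ?mem_enum // => /eqP.
  by apply: (index_inj x); rewrite mem_enum.
exists f; split => //; last by move=> x /negbTE xA; rewrite ffunE xA.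
apply/eqP; rewrite eqEcard (card_in_imset injf) cAB leqnn andbT.
by apply/subsetP => _ /imsetP[x xA ->]; apply: fA.
Qed.

Section Shadow.

Variable V : finType.
Implicit Types (X : {set {set V}}) (g : {set V}).

Definition shadow X : {set {set V}} := [set a :\ y | a in X, y in a].

Definition link X g : {set V} := [set w | w |: g \in X].

Definition extendable d X :=
  [forall a in X, forall y in a, d <= #|link X (a :\ y)|].

Lemma card_shadow_le k X : uniform k X -> #|shadow X| <= #|V| ^ k.-1.
Proof.
move=> uX; apply: leq_trans (bin_leq_expn _ _); rewrite -card_draws.
apply: subset_leq_card; apply/subsetP => _ /imset2P[a y aX ya ->].
by rewrite inE; move: (cardsD1 y a); rewrite ya (uX a aX) add1n => ->.
Qed.

Lemma shadowS X1 X : X1 \subset X -> shadow X1 \subset shadow X.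
Proof.
move=> sX; apply/subsetP => _ /imset2P[a y aX1 ya ->].
by apply/imset2P; exists a y => //; apply: (subsetP sX).
Qed.

Lemma card_star_le_link k X g :
  uniform k X -> #|g|.+1 = k -> #|[set a in X | g \subset a]| <= #|link X g|.
Proof.
move=> uX cg; apply: leq_trans (leq_imset_card (fun w => w |: g) _).
apply: subset_leq_card; apply/subsetP => b; rewrite inE => /andP[bX gb].
have [u _ eb] := subset_cardS_setU1 gb (etrans (uX b bX) (esym cg)).
by apply/imsetP; exists u; rewrite // inE -eb.
Qed.

Lemma exists_extendable_subset k d X : uniform k X ->
  exists X', [/\ X' \subset X, extendable d X' & #|X| <= #|X'| + d * #|shadow X|].
Proof.
have [m] := ubnP #|shadow X|; elim: m X => // m IH X lt_m uX.
have [extX | /forallPn[a]] := boolP (extendable d X).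
  by exists X; split; rewrite ?leq_addr.
rewrite negb_imply => /andP[aX /forallPn[y]].
rewrite negb_imply -ltnNge => /andP[ya lt_link]; set g := a :\ y in lt_link.
set Xg := [set b in X | g \subset b]; set X1 := X :\: Xg.
have sX1 : X1 \subset X by apply: subsetDl.
have lt_shadow : #|shadow X1| < #|shadow X|.
  apply: proper_card; rewrite properE shadowS //=; apply/subsetPn; exists g.
    by apply/imset2P; exists a y.
  apply/imset2P => -[b z]; rewrite !inE => /andP[gXb bX] _ eg.
  by move: gXb; rewrite bX eg subD1set.
have uX1 : uniform k X1 by move=> b bX1; apply: uX (subsetP sX1 b bX1).
have [X' [sX' extX' cX']] := IH X1 (leq_trans lt_shadow lt_m) uX1.
exists X'; split => //; first exact: subset_trans sX' sX1.
have lt_Xg : #|Xg| < d.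
  have cg : #|g|.+1 = k by rewrite -(uX a aX) (cardsD1 y a) ya add1n.
  exact: leq_ltn_trans (card_star_le_link uX cg) lt_link.
have cX : #|Xg| + #|X1| = #|X|.
  rewrite -(cardsID Xg X) (setIidPr _) //.
  by apply/subsetP => b; rewrite inE => /andP[].
have : d * #|shadow X1| + d <= d * #|shadow X|.
  by rewrite addnC -mulnS leq_mul2l lt_shadow orbT.
lia.
Qed.

End Shadow.

Section Hypertree.

Variables (T : finType) (k : nat).
Implicit Types (S : {set T}) (E : {set {set T}}).

Lemma htree_on_sub S E e : htree_on k S E -> e \in E -> e \subset S.
Proof.
move=> hS; elim: hS e => {S E} [e _ | S E f g v _ IH fE gf _ _] e'.
  by rewrite in_set1 => /eqP ->.
rewrite in_setU1 => /orP[/eqP -> | /IH eS]; last exact: subset_trans eS (subsetUr _ _).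
by rewrite setUS // (subset_trans gf (IH f fE)).
Qed.

Lemma htree_on_notin S E g v : htree_on k S E -> v \notin S -> v |: g \notin E.
Proof.
move=> hS vS; apply/negP => /(htree_on_sub hS) /subsetP/(_ v).
by rewrite setU11 (negbTE vS) => /(_ isT).
Qed.

Lemma htree_on_uniform S E : 0 < k -> htree_on k S E -> uniform k E.
Proof.
move=> k0 hS; elim: hS => {S E} [e ce | S E f g v hS IH fE gf cg vS] e'.
  by rewrite in_set1 => /eqP ->.
rewrite in_setU1 => /orP[/eqP -> | /IH //].
have vg : v \notin g.
  by apply: contra vS => /(subsetP gf) /(subsetP (htree_on_sub hS fE)).
by rewrite cardsU1 vg cg add1n prednK.
Qed.

Lemma htree_on_card S E : htree_on k S E -> #|S| + 1 = k + #|E|.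
Proof.
elim=> {S E} [e ce | S E f g v hS IH _ _ _ vS]; first by rewrite cards1 ce.
by rewrite cardsU1 vS cardsU1 (htree_on_notin _ hS vS) addnCA -IH addnA.
Qed.

Lemma htree_on_edges_gt0 S E : htree_on k S E -> 0 < #|E|.
Proof.
case=> [e _ | ? ? f g v _ _ _ _ _]; first by rewrite cards1.
by apply/card_gt0P; exists (v |: g); rewrite setU11.
Qed.

End Hypertree.

Section Embeddings.

Variables (T V : finType) (v0 : V) (X : {set {set V}}).
Implicit Types (S e f g : {set T}) (E : {set {set T}}) (phi : {ffun T -> V}).
Implicit Types (v : T) (w : V).

(* Normalising the maps to [v0] off [S] makes each injective homomorphism
   from (S, E) to X a single element of this set. *)
Definition embeddings_on S E : {set {ffun T -> V}} :=
  [set phi : {ffun T -> V} | [&& dinjectiveb phi S,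
                                [forall e in E, phi @: e \in X]
                              & [forall x in ~: S, phi x == v0]]].

Lemma embeddings_onP S E phi :
  reflect [/\ {in S &, injective phi}, forall e, e \in E -> phi @: e \in X
            & forall x, x \notin S -> phi x = v0]
          (phi \in embeddings_on S E).
Proof.
rewrite inE; apply: (iffP and3P) => [[/dinjectiveP inj /forall_inP eX] | [inj eX off]].
  by move/forall_inP=> off; split=> // x xS; apply/eqP/off; rewrite inE.
split; [exact/dinjectiveP | exact/forall_inP |].
by apply/forall_inP => x; rewrite inE => /off ->.
Qed.

Lemma card_embeddings_on_edge k e :
  uniform k X -> #|e| = k -> #|X| <= #|embeddings_on e [set e]|.
Proof.
move=> uX ce; apply: leq_trans (leq_imset_card (fun phi => phi @: e) _).
apply: subset_leq_card; apply/subsetP => a aX.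
have [phi [inj ea off]] := exists_ffun_bij_on v0 (etrans ce (esym (uX a aX))).
apply/imsetP; exists phi => //; apply/embeddings_onP; split=> // e'.
by rewrite in_set1 => /eqP ->; rewrite ea.
Qed.

Lemma card_extensions_ge d S E f g phi :
  extendable d X -> phi \in embeddings_on S E -> f \in E -> f \subset S ->
  g \subset f -> #|g|.+1 = #|f| ->
  d - #|T| <= #|link X (phi @: g) :\: phi @: S|.
Proof.
move=> extX /embeddings_onP[inj eX _] fE fS gf cg.
have [u ug fu] := subset_cardS_setU1 gf (esym cg).
have uf : u \in f by rewrite fu setU11.
have gS : g \subset S := subset_trans gf fS.
have fgu : (phi @: f) :\ phi u = phi @: g.
  rewrite fu imsetU1 setU1K //; apply/imsetP => -[x xg eux].
  by move: ug; rewrite (inj u x (subsetP fS u uf) (subsetP gS x xg) eux) xg.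
have := forall_inP extX _ (eX f fE); move/forall_inP/(_ _ (imset_f phi uf)).
rewrite fgu leq_subLR => /leq_trans; apply.
rewrite -(cardsID (phi @: S)) leq_add2r.
apply: leq_trans (subset_leq_card (subsetIr _ _)) _.
exact: leq_trans (leq_imset_card _ _) (max_card _).
Qed.

Definition extend phi v w : {ffun T -> V} :=
  [ffun x => if x == v then w else phi x].

Lemma extend_embedding S E g v w phi :
  phi \in embeddings_on S E -> (forall e, e \in E -> e \subset S) ->
  g \subset S -> v \notin S -> w \in link X (phi @: g) :\: phi @: S ->
  extend phi v w \in embeddings_on (v |: S) ((v |: g) |: E).
Proof.
move=> /embeddings_onP[inj eX off] sES gS vS /setDP[wX wS].
have ext_v : extend phi v w v = w by rewrite ffunE eqxx.
have ext_S x : x \in S -> extend phi v w x = phi x.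
  by move=> xS; rewrite ffunE ifN //; apply: contraNneq vS => <-.
have ext_im e : e \subset S -> extend phi v w @: e = phi @: e.
  by move=> /subsetP eS; apply: eq_in_imset => x /eS /ext_S.
apply/embeddings_onP; split.
- move=> x y; rewrite !in_setU1.
  case: (eqVneq x v) => [-> | xv]; case: (eqVneq y v) => [-> | yv] //= xS yS.
  + by rewrite ext_v ext_S // => ewy; move: wS; rewrite ewy imset_f.
  + by rewrite ext_v ext_S // => ewy; move: wS; rewrite -ewy imset_f.
  + by rewrite !ext_S //; apply: inj.
- move=> e; rewrite in_setU1 => /orP[/eqP -> | eE]; last by rewrite ext_im ?eX ?sES.
  by move: wX; rewrite inE imsetU1 ext_v ext_im.
- by move=> x; rewrite in_setU1 negb_or => /andP[xv xS]; rewrite ffunE (negbTE xv) off.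
Qed.

Lemma card_embeddings_on_step d S E f g v :
  extendable d X -> (forall e, e \in E -> e \subset S) ->
  f \in E -> g \subset f -> #|g|.+1 = #|f| -> v \notin S ->
  #|embeddings_on S E| * (d - #|T|) <= #|embeddings_on (v |: S) ((v |: g) |: E)|.
Proof.
move=> extX sES fE gf cg vS; have gS := subset_trans gf (sES f fE).
set F := embeddings_on S E; pose W phi := link X (phi @: g) :\: phi @: S.
set P := [set p : {ffun T -> V} * V | (p.1 \in F) && (p.2 \in W p.1)].
have inP p : (p \in P) = (p.1 \in F) && (p.2 \in W p.1) by rewrite inE.
have cP : #|F| * (d - #|T|) <= #|P|.
  rewrite -sum_nat_const; apply: (@leq_trans (\sum_(phi in F) #|W phi|)).
    apply: leq_sum => phi phiF.
    exact: card_extensions_ge extX phiF fE (sES f fE) gf cg.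
  rewrite (eq_bigr (fun phi => \sum_(w in W phi) 1)) => [|phi _].
    by rewrite pair_big_dep sum1dep_card.
  by rewrite sum1_card.
apply: leq_trans cP _.
have inj_ext : {in P &, injective (fun p => extend p.1 v p.2)}.
  move=> [phi1 w1] [phi2 w2]; rewrite !inP /=.
  move=> /andP[/embeddings_onP[_ _ off1] _] /andP[/embeddings_onP[_ _ off2] _] e12.
  have at_x x : extend phi1 v w1 x = extend phi2 v w2 x by rewrite e12.
  have := at_x v; rewrite !ffunE eqxx => ->; congr pair; apply/ffunP => x.
  by have := at_x x; rewrite !ffunE; case: eqP => [-> _ | _ //]; rewrite off1 ?off2.
rewrite -(card_in_imset inj_ext); apply: subset_leq_card.
apply/subsetP => _ /imsetP[[phi w] + ->]; rewrite inP /= => /andP[phiF wW].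
exact: extend_embedding phiF sES gS vS wW.
Qed.

Lemma card_embeddings_on_htree k d S E :
  0 < k -> uniform k X -> extendable d X -> htree_on k S E ->
  #|X| * (d - #|T|) ^ #|E|.-1 <= #|embeddings_on S E|.
Proof.
move=> k0 uX extX; elim=> {S E} [e ce | S E f g v hS IH fE gf cg vS].
  by rewrite cards1 muln1; apply: card_embeddings_on_edge uX ce.
have cgf : #|g|.+1 = #|f| by rewrite cg (htree_on_uniform k0 hS fE) prednK.
have sES e : e \in E -> e \subset S := htree_on_sub hS.
apply: leq_trans (card_embeddings_on_step extX sES fE gf cgf vS).
rewrite cardsU1 (htree_on_notin _ hS vS) add1n -(prednK (htree_on_edges_gt0 hS)) /=.
by rewrite expnS mulnCA mulnC leq_mul2r IH orbT.
Qed.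

End Embeddings.

Lemma embeddings_on_sub_Inj (T V : finType) (v0 : V) (X EX : {set {set V}})
    (EH : {set {set T}}) :
  X \subset EX -> embeddings_on v0 X [set: T] EH \subset Inj EH EX.
Proof.
move=> sX; apply/subsetP => phi /embeddings_onP[inj eX _]; rewrite inE.
apply/andP; split; first by apply/injectiveP => x y; apply: inj; rewrite inE.
by apply/forall_inP => e /eX /(subsetP sX).
Qed.

Lemma card_Inj_ge (T V : finType) (k d : nat) (EX : {set {set V}})
    (EH : {set {set T}}) :
  0 < k -> uniform k EX -> is_hypertree k EH ->
  (#|EX| - d * #|V| ^ k.-1) * (d - #|T|) ^ #|EH|.-1 <= #|Inj EH EX|.
Proof.
move=> k0 uEX hH; have [v0 _ | V0] := pickP V; last first.
  suff -> : #|EX| = 0 by [].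
  apply/eqP; rewrite cards_eq0; apply/eqP/setP => a; rewrite inE.
  have -> : a = set0 by apply/setP => x; have := V0 x.
  by apply/negP => /uEX; rewrite cards0 => k_eq0; rewrite -k_eq0 in k0.
have [X [sX extX cX]] := exists_extendable_subset d uEX.
have uX : uniform k X by move=> a aX; apply: uEX (subsetP sX a aX).
apply: leq_trans (subset_leq_card (embeddings_on_sub_Inj v0 EH sX)).
apply: leq_trans (card_embeddings_on_htree v0 k0 uX extX hH); rewrite leq_mul2r.
apply/orP; right; rewrite leq_subLR addnC; apply: leq_trans cX _.
by rewrite leq_add2l leq_mul2l (card_shadow_le uEX) orbT.
Qed.

Section RealBounds.

Local Open Scope R_scope.

Lemma INR_expn m n : INR (m ^ n) = INR m ^ n.
Proof. by elim: n => // n IH; rewrite expnS mult_INR IH. Qed.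

Lemma exists_nat_floor x : 0 <= x -> exists m : nat, INR m <= x < INR m + 1.
Proof.
move=> x_ge0; have [up_gt up_le] := archimed x.
have up_gt0 : (0 < up x)%Z by apply: lt_IZR; lra.
exists (Z.to_nat (up x - 1)); rewrite INR_IZR_INZ Znat.Z2Nat.id; last by lia.
by rewrite minus_IZR; lra.
Qed.

Lemma Rpower_INR_unbounded b M : 0 < b -> 0 < M ->
  exists N : nat, forall n : nat, (N <= n)%N -> M <= Rpower (INR n) b.
Proof.
move=> b_gt0 M_gt0; have root_gt0 : 0 < Rpower M (/ b) by apply: exp_pos.
have [m [_ ltm]] := exists_nat_floor (Rlt_le _ _ root_gt0).
exists m.+1 => n le_mn.
have ltn : INR m + 1 <= INR n by rewrite -S_INR; apply: le_INR; apply/leP.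
have -> : M = Rpower (Rpower M (/ b)) b.
  by rewrite Rpower_mult Rinv_l ?Rpower_1 //; lra.
apply: Rle_Rpower_l; lra.
Qed.

Lemma Rpower_INR_succ_sub x r m : 0 < x ->
  Rpower x (INR m.+1 - r) = Rpower x (1 - r) * x ^ m.
Proof.
move=> x_gt0; rewrite -Rpower_pow // -Rpower_plus S_INR; congr Rpower; ring.
Qed.

Lemma Rpower_hypertree_exponent x r (t k e : nat) : 0 < x -> (0 < e)%N ->
  (t + 1 = k + e)%N ->
  Rpower x (INR t - INR e * r) = Rpower x (INR k - r) * Rpower x (1 - r) ^ e.-1.
Proof.
move=> x_gt0 e_gt0 cte.
rewrite -Rpower_pow ?Rpower_mult -?Rpower_plus; last exact: exp_pos.
have INR_e : INR e = INR e.-1 + 1 by rewrite -S_INR prednK.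
rewrite (_ : t = k + e.-1)%N ?plus_INR ?INR_e; last by lia.
congr Rpower; ring.
Qed.

Lemma INR_subn_ge (m n : nat) a :
  0 <= a -> a <= INR m - INR n -> a <= INR (m - n).
Proof.
move=> a_ge0 le_a; rewrite minus_INR; first lra.
by apply: INR_le; lra.
Qed.

Lemma card_Inj_ge_R (T V : finType) (k : nat) (EX : {set {set V}})
    (EH : {set {set T}}) q :
  (0 < k)%N -> uniform k EX -> is_hypertree k EH ->
  4 * (INR #|T| + 1) <= q -> q * INR #|V| ^ k.-1 <= INR #|EX| ->
  q * INR #|V| ^ k.-1 / 2 * (q / 4) ^ #|EH|.-1 <= INR #|Inj EH EX|.
Proof.
move=> k_gt0 uEX hH q_large EX_large; set A := INR #|V| ^ k.-1 in EX_large *.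
have A_ge0 : 0 <= A by apply: pow_le; apply: pos_INR.
have t_ge0 := pos_INR #|T|.
have [d [d_le d_gt]] := exists_nat_floor (ltac:(lra) : 0 <= q / 2).
have half : q * A / 2 <= INR (#|EX| - d * #|V| ^ k.-1).
  have dA : INR d * A <= q / 2 * A by apply: Rmult_le_compat_r; lra.
  apply: INR_subn_ge; first by nra.
  by rewrite mult_INR INR_expn -/A; lra.
have quarter : q / 4 <= INR (d - #|T|) by apply: INR_subn_ge; lra.
apply: Rle_trans (le_INR _ _ (leP (card_Inj_ge d k_gt0 uEX hH))).
rewrite mult_INR INR_expn; apply: Rmult_le_compat => //; first by nra.
  by apply: pow_le; lra.
by apply: pow_incr; lra.
Qed.

End RealBounds.

Theorem lemma8 (k : nat) (r : R) (T : finType) (EH : {set {set T}}) :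
  (2 <= k)%N -> (0 <= r < 1)%R -> is_hypertree k EH ->
  exists c : R, (0 < c)%R /\
  exists N : nat, forall n : nat, (N <= n)%N ->
    forall EX : {set {set 'I_n}}, uniform k EX ->
      (Rpower (INR n) (INR k - r) <= INR #|EX|)%R ->
      (c * Rpower (INR n) (INR #|T| - INR #|EH| * r) <= INR #|Inj EH EX|)%R.
Proof.
move=> k_ge2 [r_ge0 r_lt1] hH; have k_gt0 : (0 < k)%N by apply: leq_trans k_ge2.
have e_gt0 := htree_on_edges_gt0 hH; have cte := htree_on_card hH.
rewrite cardsT in cte.
have [N large] : exists N : nat, forall n : nat, (N <= n)%N ->
    (4 * (INR #|T| + 1) <= Rpower (INR n) (1 - r))%R.
  by apply: Rpower_INR_unbounded; have := pos_INR #|T|; lra.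
exists (/ 2 * (/ 4) ^ #|EH|.-1)%R; split.
  by apply: Rmult_lt_0_compat; [lra | apply: pow_lt; lra].
exists (maxn N 1) => n; rewrite geq_max => /andP[/large q_large n_gt0] EX uEX.
have n_pos : (0 < INR n)%R by apply: lt_0_INR; apply/ltP.
rewrite (Rpower_hypertree_exponent _ n_pos e_gt0 cte) -(prednK k_gt0).
rewrite !Rpower_INR_succ_sub //; set q := Rpower (INR n) (1 - r) in q_large *.
move=> EX_large; have := card_Inj_ge_R k_gt0 uEX hH q_large.
rewrite card_ord => /(_ EX_large); apply: Rle_trans; apply: Req_le.
by rewrite /Rdiv Rpow_mult_distr; ring.
Qed.
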